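(* Let $\mathfrak g=\mathbb R f_1\ltimes_M\mathbb R^3$ be a 4-dimensional almost abelian Lie algebra, where $\mathbb R^3$ is an abelian ideal with basis $\{f_2,f_3,f_4\}$ and $M=\operatorname{ad}_{f_1}|_{\mathbb R^3}$ has matrix $\begin{pmatrix}\mu & w^{T}\\ 0 & A\end{pmatrix}$ with $\mu\in\mathbb R$, $w\in\mathbb R^2$, $A\in\mathfrak{gl}(2,\mathbb R)$. If $\operatorname{tr}(A)\neq 0$, then $\mathfrak g$ admits an LCS structure.
   Context: An LCS structure on a Lie algebra $\mathfrak g$ is a pair $(\omega,\theta)$ with $\omega\in\Lambda^2\mathfrak g^*$ non-degenerate and $\theta\in\mathfrak g^*$ closed and nonzero, such that $d\omega=\theta\wedge\omega$ ($d$ the Chevalley–Eilenberg differential). *)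

From HB Require Import structures.
From mathcomp Require Import all_boot all_order all_algebra.
Set Implicit Arguments. Unset Strict Implicit. Unset Printing Implicit Defensive.
Import Order.TTheory GRing.Theory Num.Theory.
Local Open Scope ring_scope.

(* Lie algebras on R^n = 'cV[R]_n given by a bracket [br].  Forms:
   a 2-form is represented by a skew-symmetric matrix Om, acting as
   om(x,y) = x^T Om y ; a 1-form by a row vector t, acting as t x. *)
Section LCS.
Variables (R : fieldType) (n : nat) (br : 'cV[R]_n -> 'cV[R]_n -> 'cV[R]_n).

Definition form2 (Om : 'M[R]_n) (x y : 'cV[R]_n) : R := (x^T *m Om *m y) 0 0.
Definition form1 (t : 'rV[R]_n) (x : 'cV[R]_n) : R := (t *m x) 0 0.

Definition CE_d1 (t : 'rV[R]_n) (x y : 'cV[R]_n) : R := - form1 t (br x y).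
Definition CE_d2 (Om : 'M[R]_n) (x y z : 'cV[R]_n) : R :=
  - form2 Om (br x y) z + form2 Om (br x z) y - form2 Om (br y z) x.
Definition wedge12 (t : 'rV[R]_n) (Om : 'M[R]_n) (x y z : 'cV[R]_n) : R :=
  form1 t x * form2 Om y z - form1 t y * form2 Om x z + form1 t z * form2 Om x y.

Definition is_LCS (Om : 'M[R]_n) (t : 'rV[R]_n) : Prop :=
  [/\ Om^T = - Om,
      (forall x, (forall y, form2 Om x y = 0) -> x = 0),
      (forall x y, CE_d1 t x y = 0),
      t != 0 &
      (forall x y z, CE_d2 Om x y z = wedge12 t Om x y z)].
End LCS.

(* The almost abelian Lie algebra R f1 |x_M R^3, in coordinates w.r.t. the
   basis (f1, f2, f3, f4) (index 0 = f1).  M = ad_{f1}|_{R^3} in the basis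
   (f2,f3,f4), with the usual column convention [f1, f_j] = sum_i M_ij f_i. *)
Definition almost_abelian_M (R : fieldType) (mu : R) (w : 'cV[R]_2) (A : 'M[R]_2)
  : 'M[R]_(1 + 2) := block_mx (mu%:M : 'M_1) w^T 0 A.

Definition almost_abelian_br (R : fieldType) (M : 'M[R]_(1 + 2))
  (x y : 'cV[R]_(1 + (1 + 2))) : 'cV[R]_(1 + (1 + 2)) :=
  let N : 'M[R]_(1 + (1 + 2)) := block_mx (0 : 'M_1) 0 0 M in
  x 0 0 *: (N *m y) - y 0 0 *: (N *m x).

From HB Require Import structures.
From mathcomp Require Import all_boot all_order all_algebra.
From mathcomp Require Import ring.
Set Implicit Arguments. Unset Strict Implicit. Unset Printing Implicit Defensive.
Import Order.TTheory GRing.Theory Num.Theory.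
Local Open Scope ring_scope.

(* Take omega = f^12 + f^34 and theta = -tr(A) f^1.  All brackets lie in the
   ideal R^3, so f^1 is closed and d(f^1 /\ f^k) = 0 = theta /\ f^1 /\ f^k.
   On the plane spanned by f3, f4 the bracket acts through A, and A is a
   derivation of the area form up to its trace (A^T J + J A = tr(A) J), which
   gives d f^34 = -tr(A) f^1 /\ f^34 = theta /\ f^34.  Finally theta <> 0
   exactly because tr(A) <> 0. *)

Section Forms.
Context {R : fieldType} {n : nat}.
Implicit Types (Om : 'M[R]_n) (t : 'rV[R]_n) (x y z : 'cV[R]_n).

Definition wedge_mx (i j : 'I_n) : 'M[R]_n := delta_mx i j - delta_mx j i.

Lemma trmx_wedge_mx i j : (wedge_mx i j)^T = - wedge_mx i j.
Proof. by rewrite linearB /= !trmx_delta opprB. Qed.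

Lemma form1_scale_delta (c : R) i x : form1 (c *: delta_mx 0 i) x = c * x i 0.
Proof. by rewrite /form1 -scalemxAl mxE -rowE mxE. Qed.

Lemma form2D Om1 Om2 x y : form2 (Om1 + Om2) x y = form2 Om1 x y + form2 Om2 x y.
Proof. by rewrite /form2 mulmxDr mulmxDl mxE. Qed.

Lemma form2B Om1 Om2 x y : form2 (Om1 - Om2) x y = form2 Om1 x y - form2 Om2 x y.
Proof. by rewrite /form2 mulmxBr mulmxBl [LHS]mxE [X in _ + X]mxE. Qed.

Lemma form2_delta i j x y : form2 (delta_mx i j) x y = x i 0 * y j 0.
Proof.
by rewrite /form2 -(mul_delta_mx (0 : 'I_1)) mulmxA -colE -mulmxA -rowE mxE big_ord1 !mxE.
Qed.

Lemma form2_wedge_mx i j x y : form2 (wedge_mx i j) x y = x i 0 * y j 0 - x j 0 * y i 0.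
Proof. by rewrite form2B !form2_delta. Qed.

Lemma form2_mulmxl (B : 'M[R]_n) Om x y : form2 Om (B *m x) y = form2 (B^T *m Om) x y.
Proof. by rewrite /form2 trmx_mul !mulmxA. Qed.

Lemma form2_mulmxr (B : 'M[R]_n) Om x y : form2 Om x (B *m y) = form2 (Om *m B) x y.
Proof. by rewrite /form2 !mulmxA. Qed.

Lemma form2Z (c : R) Om x y : form2 (c *: Om) x y = c * form2 Om x y.
Proof. by rewrite /form2 -scalemxAr -scalemxAl mxE. Qed.

Lemma form2_linearl Om (a b : R) x y z :
  form2 Om (a *: x - b *: y) z = a * form2 Om x z - b * form2 Om y z.
Proof.
rewrite /form2 raddfB /= !linearZ /= scalerN !mulmxBl -!scalemxAl.
by rewrite [LHS]mxE [X in _ + X]mxE !mxE.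
Qed.

Lemma form2_skew Om x y : Om^T = - Om -> form2 Om x y = - form2 Om y x.
Proof.
move=> skew; rewrite /form2 -[x^T *m Om *m y]trmxK [LHS]mxE !trmx_mul trmxK skew.
by rewrite mulNmx mulmxN mulmxA mxE.
Qed.

Lemma CE_d2D (br : 'cV[R]_n -> 'cV[R]_n -> 'cV[R]_n) Om1 Om2 x y z :
  CE_d2 br (Om1 + Om2) x y z = CE_d2 br Om1 x y z + CE_d2 br Om2 x y z.
Proof. rewrite /CE_d2 !form2D; ring. Qed.

Lemma wedge12D t Om1 Om2 x y z :
  wedge12 t (Om1 + Om2) x y z = wedge12 t Om1 x y z + wedge12 t Om2 x y z.
Proof. rewrite /wedge12 !form2D; ring. Qed.

Lemma wedge12_delta_wedge_mx (c : R) i k x y z :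
  wedge12 (c *: delta_mx 0 i) (wedge_mx i k) x y z = 0.
Proof. rewrite /wedge12 !form1_scale_delta !form2_wedge_mx; ring. Qed.

End Forms.
Arguments wedge_mx : simpl never.

Lemma wedge_mx_trace (R : fieldType) (A : 'M[R]_2) :
  A^T *m wedge_mx 0 1 + wedge_mx 0 1 *m A = \tr A *: wedge_mx 0 1.
Proof.
have ord2P (k : 'I_2) : k = 0 \/ k = 1.
  by case: k => [[|[|//]] ?]; [left | right]; apply/val_inj.
have lift01 : lift ord0 ord0 = 1 :> 'I_2 by apply/val_inj.
apply/matrixP => i j; rewrite !mxE /mxtrace !big_ord_recl !big_ord0 !mxE lift01.
by case: (ord2P i) => ->; case: (ord2P j) => ->; rewrite /=; ring.
Qed.

Lemma form2_wedge_mx_mulmx (R : fieldType) (A : 'M[R]_2) u v :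
  form2 (wedge_mx 0 1) (A *m u) v + form2 (wedge_mx 0 1) u (A *m v) =
  \tr A * form2 (wedge_mx 0 1) u v.
Proof. by rewrite form2_mulmxl form2_mulmxr -form2D wedge_mx_trace form2Z. Qed.

Section AlmostAbelian.
Context {R : fieldType}.
Local Notation V := 'cV[R]_(1 + (1 + 2)).

Definition f2 : 'I_(1 + (1 + 2)) := rshift 1 0.
Definition f3 : 'I_(1 + (1 + 2)) := rshift 1 (rshift 1 0).
Definition f4 : 'I_(1 + (1 + 2)) := rshift 1 (rshift 1 1).

Lemma ord4P (i : 'I_(1 + (1 + 2))) : [\/ i = 0, i = f2, i = f3 | i = f4].
Proof.
by case: i => [[|[|[|[|//]]]] ?]; [constructor 1|constructor 2|constructor 3|constructor 4];
  apply/val_inj.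
Qed.

Definition plane (x : V) : 'cV[R]_2 := dsubmx (dsubmx x).

Lemma form2_wedge_mx_f3f4 (x y : V) :
  form2 (wedge_mx f3 f4) x y = form2 (wedge_mx 0 1) (plane x) (plane y).
Proof. by rewrite !form2_wedge_mx !mxE. Qed.

Definition symplectic_mx : 'M[R]_(1 + (1 + 2)) := wedge_mx 0 f2 + wedge_mx f3 f4.

Lemma symplectic_mx_skew : symplectic_mx^T = - symplectic_mx.
Proof. by rewrite /symplectic_mx linearD /= !trmx_wedge_mx [RHS]opprD. Qed.

Lemma symplectic_mx_nondegenerate (x : V) :
  (forall y, form2 symplectic_mx x y = 0) -> x = 0.
Proof.
move=> x_ker.
have form2_basis k : form2 symplectic_mx x (delta_mx k 0) =
    x 0 0 * (f2 == k)%:R - x f2 0 * (0 == k)%:R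
    + (x f3 0 * (f4 == k)%:R - x f4 0 * (f3 == k)%:R).
  by rewrite form2D !form2_wedge_mx !mxE !andbT.
have coord k : x k 0 = 0.
  case: (ord4P k) => ->.
  - by rewrite -(x_ker (delta_mx f2 0)) form2_basis /=; ring.
  - by apply: oppr_inj; rewrite oppr0 -(x_ker (delta_mx 0 0)) form2_basis /=; ring.
  - by rewrite -(x_ker (delta_mx f4 0)) form2_basis /=; ring.
  - by apply: oppr_inj; rewrite oppr0 -(x_ker (delta_mx f3 0)) form2_basis /=; ring.
by apply/matrixP => k l; rewrite ord1 coord mxE.
Qed.

Section Bracket.
Variable M : 'M[R]_(1 + 2).
Local Notation br := (almost_abelian_br M).

Lemma almost_abelian_brE (x y : V) :
  br x y = col_mx 0 (x 0 0 *: (M *m dsubmx y) - y 0 0 *: (M *m dsubmx x)).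
Proof.
have mulN v : block_mx (0 : 'M_1) 0 0 M *m v = col_mx 0 (M *m dsubmx v).
  by rewrite -{1}[v]vsubmxK mul_block_col !mul0mx addr0 add0r.
by rewrite /almost_abelian_br !mulN !scale_col_mx !scaler0 opp_col_mx add_col_mx oppr0 addr0.
Qed.

Lemma almost_abelian_br0 (x y : V) : br x y 0 0 = 0.
Proof.
have -> : (0 : 'I_(1 + (1 + 2))) = lshift _ 0 by apply/val_inj.
by rewrite almost_abelian_brE col_mxEu mxE.
Qed.

Lemma CE_d1_delta0 (c : R) (x y : V) : CE_d1 br (c *: delta_mx 0 0) x y = 0.
Proof. by rewrite /CE_d1 form1_scale_delta almost_abelian_br0 mulr0 oppr0. Qed.

Lemma CE_d2_wedge_mx0 k (x y z : V) : CE_d2 br (wedge_mx 0 k) x y z = 0.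
Proof.
(* each coordinate of [br x y] is x_1 a(y) - y_1 a(x) for a fixed functional a *)
rewrite /CE_d2 !form2_wedge_mx !almost_abelian_br0 /almost_abelian_br !mxE; ring.
Qed.

End Bracket.

Variables (mu : R) (w : 'cV[R]_2) (A : 'M[R]_2).
Local Notation br := (almost_abelian_br (almost_abelian_M mu w A)).

Lemma dsubmx_almost_abelian_M (v : 'cV[R]_(1 + 2)) :
  dsubmx (almost_abelian_M mu w A *m v) = A *m dsubmx v.
Proof. by rewrite -{1}[v]vsubmxK mul_block_col col_mxKd mul0mx add0r. Qed.

Lemma plane_br (x y : V) :
  plane (br x y) = x 0 0 *: (A *m plane y) - y 0 0 *: (A *m plane x).
Proof.
by rewrite /plane almost_abelian_brE col_mxKd linearB !linearZ /= !dsubmx_almost_abelian_M.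
Qed.

Lemma CE_d2_wedge_mx_f3f4 (x y z : V) :
  CE_d2 br (wedge_mx f3 f4) x y z =
  wedge12 (- \tr A *: delta_mx 0 0) (wedge_mx f3 f4) x y z.
Proof.
pose s := form2 (wedge_mx 0 1 : 'M[R]_2).
have s_swap u v : s (A *m v) u = s (A *m u) v - \tr A * s u v.
  rewrite /s (form2_skew _ _ (trmx_wedge_mx 0 1)) -form2_wedge_mx_mulmx; ring.
rewrite /CE_d2 /wedge12 !form1_scale_delta !form2_wedge_mx_f3f4 !plane_br !form2_linearl -/s.
rewrite (s_swap (plane y) (plane z)) (s_swap (plane x) (plane z)) (s_swap (plane x) (plane y)).
ring.
Qed.

Lemma CE_d2_symplectic_mx (x y z : V) :
  CE_d2 br symplectic_mx x y z = wedge12 (- \tr A *: delta_mx 0 0) symplectic_mx x y z.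
Proof.
by rewrite CE_d2D wedge12D CE_d2_wedge_mx0 wedge12_delta_wedge_mx CE_d2_wedge_mx_f3f4.
Qed.

End AlmostAbelian.

Theorem lemma4p4 (R : realFieldType) (mu : R) (w : 'cV[R]_2) (A : 'M[R]_2) :
  \tr A != 0 ->
  exists (Om : 'M[R]_(1 + (1 + 2))) (t : 'rV[R]_(1 + (1 + 2))),
    is_LCS (almost_abelian_br (almost_abelian_M mu w A)) Om t.
Proof.
move=> trA; exists symplectic_mx, (- \tr A *: delta_mx 0 0); split.
- exact: symplectic_mx_skew.
- exact: symplectic_mx_nondegenerate.
- exact: CE_d1_delta0.
- rewrite scaler_eq0 oppr_eq0 negb_or trA /=.
  by apply/eqP => /matrixP/(_ 0 0); rewrite !mxE /= => /eqP; rewrite oner_eq0.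
- exact: CE_d2_symplectic_mx.
Qed.
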